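(* Let $(G^A_n)_{n\in\mathbb{N}}$ and $(G^B_n)_{n\in\mathbb{N}}$ be bi-iteratively constructible families of graphs. Then the family $(G^A_n\sqcup G^B_n)_{n\in\mathbb{N}}$ of disjoint unions is bi-iteratively constructible. If both families are iteratively constructible, then so is $(G^A_n\sqcup G^B_n)_{n\in\mathbb{N}}$.
   Context: A $k$-graph is $G=(V,E;R_1,\dots,R_k)$ where $(V,E)$ is a finite simple graph (its underlying graph) and $R_1,\dots,R_k$ (the labels, possibly empty) partition $V$. Basic operations on $k$-graphs: $Add_i$ adds a new isolated vertex to $R_i$; $\rho_{i\to j}$ moves all vertices of $R_i$ into $R_j$, leaving $R_i$ empty; $\eta_{i,j}$ adds all edges between $R_i$ and $R_j$; for $b\in\mathbb{N}$, $\eta^b_{i,j}$ acts as $\eta_{i,j}$ if $|R_i\cup R_j|\le b$ and otherwise does nothing; $\delta_{i,j}$ removes all edges between $R_i$ and $R_j$. An elementary operation is a finite composition of basic operations; $id$ is the empty composition. A sequence of $k$-graphs is an $F$-iteration family if $G_{n+1}=F(G_n)$ for all $n$ ($G_0$ a $k$-graph, $F$ elementary), and an $(H,F,L)$-bi-iteration family if $G_{n+1}=H(F^n(L(G_n)))$ for all $n$, $F^n$ denoting $n$-fold application. A sequence of graphs is (bi-)iteratively constructible if for some $k$ it is the sequence of underlying graphs of an iteration (resp. bi-iteration) family of $k$-graphs. *)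

From mathcomp Require Import all_boot.
Set Implicit Arguments. Unset Strict Implicit. Unset Printing Implicit Defensive.

Record graph := Graph { gn : nat; gadj : rel 'I_gn }.

Definition graph_iso (G H : graph) : Prop :=
  exists f : 'I_(gn G) -> 'I_(gn H),
    bijective f /\ forall x y, gadj x y = gadj (f x) (f y).

Definition gunion (G H : graph) : graph :=
  @Graph (gn G + gn H) (fun x y =>
    match split x, split y with
    | inl a, inl b => gadj a b
    | inr a, inr b => gadj a b
    | _, _ => false
    end).

(* k-graphs: vertices 0..kn-1, adjacency and labelling given on nat
   (only values on vertices < kn matter); labels in 'I_k. *)
Record kgraph (k : nat) := KGraph {
  kn : nat; kadj : nat -> nat -> bool; klab : nat -> 'I_k }.

Definition kwf k (G : kgraph k) : Prop :=
  (forall x y, x < kn G -> y < kn G -> kadj G x y = kadj G y x) /\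
  (forall x, x < kn G -> kadj G x x = false).

Definition underlying k (G : kgraph k) : graph :=
  @Graph (kn G) (fun x y => kadj G x y).

Inductive basic_op (k : nat) :=
| Add of 'I_k
| Rho of 'I_k & 'I_k
| Eta of 'I_k & 'I_k
| EtaB of nat & 'I_k & 'I_k
| Delta of 'I_k & 'I_k.

Definition between k (G : kgraph k) (i j : 'I_k) (x y : nat) : bool :=
  ((klab G x == i) && (klab G y == j)) || ((klab G x == j) && (klab G y == i)).

Definition eta_op k (i j : 'I_k) (G : kgraph k) : kgraph k :=
  @KGraph k (kn G)
    (fun x y => kadj G x y ||
       [&& x != y, x < kn G, y < kn G & between G i j x y])
    (klab G).

Definition apply_basic k (o : basic_op k) (G : kgraph k) : kgraph k :=
  match o with
  | Add i => @KGraph k (kn G).+1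
      (fun x y => [&& kadj G x y, x < kn G & y < kn G])
      (fun x => if x == kn G then i else klab G x)
  | Rho i j => @KGraph k (kn G) (kadj G)
      (fun x => if klab G x == i then j else klab G x)
  | Eta i j => eta_op i j G
  | EtaB b i j =>
      if count (fun x => (klab G x == i) || (klab G x == j)) (iota 0 (kn G)) <= b
      then eta_op i j G else G
  | Delta i j => @KGraph k (kn G)
      (fun x y => kadj G x y && ~~ between G i j x y) (klab G)
  end.

(* elementary operation: finite composition of basic operations,
   applied left to right; [::] is id *)
Definition elem_op (k : nat) := seq (basic_op k).

Definition apply_elem k (F : elem_op k) (G : kgraph k) : kgraph k :=
  foldl (fun H o => apply_basic o H) G F.

Definition iter_family k (G0 : kgraph k) (F : elem_op k) (n : nat) : kgraph k :=
  iter n (apply_elem F) G0.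

Fixpoint bi_iter_family k (G0 : kgraph k) (H F L : elem_op k) (n : nat)
  : kgraph k :=
  match n with
  | 0 => G0
  | m.+1 => apply_elem H (iter m (apply_elem F)
                            (apply_elem L (bi_iter_family G0 H F L m)))
  end.

Definition iteratively_constructible (Gs : nat -> graph) : Prop :=
  exists k (G0 : kgraph k) (F : elem_op k),
    kwf G0 /\ forall n, graph_iso (Gs n) (underlying (iter_family G0 F n)).

Definition bi_iteratively_constructible (Gs : nat -> graph) : Prop :=
  exists k (G0 : kgraph k) (H F L : elem_op k),
    kwf G0 /\ forall n, graph_iso (Gs n) (underlying (bi_iter_family G0 H F L n)).

(* Let the families be generated by k_A-graphs and k_B-graphs.  We work with
   k_A + k_B labels, embedding the labels of A by [lshift] and those of B by
   [rshift].  The key notion is [is_union ga gb A B C], witnessed by a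
   [union_embedding]: the k-graph C is, up to a renaming of vertices, the
   disjoint union of A and B with their labels relabelled along the
   injections ga, gb, whose images are disjoint.
   - A basic operation of A, relabelled along ga, acts on C exactly as it acts
     on the A-part, leaving the B-part untouched (the bounded [EtaB] needs the
     count of vertices carrying the relevant labels to coincide).
   - By symmetry, the same holds for B; hence running the relabelled elementary
     operation of A followed by that of B ([union_op]) preserves the invariant,
     and so do iterations and bi-iterations.
   - The explicit disjoint union [kunion] of the two starting k-graphs satisfies
     the invariant, and the invariant yields the required graph isomorphisms. *)

From mathcomp Require Import all_boot zify.
Set Implicit Arguments. Unset Strict Implicit. Unset Printing Implicit Defensive.

Definition relabel_op k ka (g : 'I_ka -> 'I_k) (o : basic_op ka) : basic_op k :=
  match o with
  | Add i => Add (g i)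
  | Rho i j => Rho (g i) (g j)
  | Eta i j => Eta (g i) (g j)
  | EtaB b i j => EtaB b (g i) (g j)
  | Delta i j => Delta (g i) (g j)
  end.

Definition relabel k ka (g : 'I_ka -> 'I_k) (F : elem_op ka) : elem_op k :=
  map (relabel_op g) F.

Definition union_op k ka kb (ga : 'I_ka -> 'I_k) (gb : 'I_kb -> 'I_k)
  (FA : elem_op ka) (FB : elem_op kb) : elem_op k :=
  relabel ga FA ++ relabel gb FB.

Lemma apply_elem_cat k (F1 F2 : elem_op k) (G : kgraph k) :
  apply_elem (F1 ++ F2) G = apply_elem F2 (apply_elem F1 G).
Proof. by rewrite /apply_elem foldl_cat. Qed.

Record union_embedding k ka kb (ga : 'I_ka -> 'I_k) (gb : 'I_kb -> 'I_k)
  (A : kgraph ka) (B : kgraph kb) (C : kgraph k) (fa fb : nat -> nat) : Prop :=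
  UnionEmbedding {
 ue_size : kn C = kn A + kn B;
 ue_rangeA : forall x, x < kn A -> fa x < kn C;
 ue_rangeB : forall y, y < kn B -> fb y < kn C;
 ue_injA : forall x x', x < kn A -> x' < kn A -> fa x = fa x' -> x = x';
 ue_injB : forall y y', y < kn B -> y' < kn B -> fb y = fb y' -> y = y';
 ue_disj : forall x y, x < kn A -> y < kn B -> fa x <> fb y;
 ue_labA : forall x, x < kn A -> klab C (fa x) = ga (klab A x);
 ue_labB : forall y, y < kn B -> klab C (fb y) = gb (klab B y);
 ue_adjAA : forall x x', x < kn A -> x' < kn A -> kadj C (fa x) (fa x') = kadj A x x';
 ue_adjBB : forall y y', y < kn B -> y' < kn B -> kadj C (fb y) (fb y') = kadj B y y';
 ue_adjAB : forall x y, x < kn A -> y < kn B -> kadj C (fa x) (fb y) = false;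
 ue_adjBA : forall x y, x < kn A -> y < kn B -> kadj C (fb y) (fa x) = false }.

Lemma union_embedding_sym k ka kb (ga : 'I_ka -> 'I_k) (gb : 'I_kb -> 'I_k)
  A B C fa fb :
  union_embedding ga gb A B C fa fb -> union_embedding gb ga B A C fb fa.
Proof.
move=> E; constructor; try by case: E.
- by rewrite (ue_size E) addnC.
- by move=> y x hy hx e; apply: (ue_disj E hx hy (esym e)).
- by move=> y x hy hx; apply: (ue_adjBA E hx hy).
- by move=> y x hy hx; apply: (ue_adjAB E hx hy).
Qed.

(* Counting vertices of C by a predicate splits into A-part and B-part; this
   is what makes the bounded operation [EtaB] behave well. *)
Lemma count_union_embedding k ka kb (ga : 'I_ka -> 'I_k) (gb : 'I_kb -> 'I_k)
  A B C fa fb (p : pred nat) : union_embedding ga gb A B C fa fb ->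
  count p (iota 0 (kn C)) =
  count (p \o fa) (iota 0 (kn A)) + count (p \o fb) (iota 0 (kn B)).
Proof.
move=> E; set s := map fa (iota 0 (kn A)) ++ map fb (iota 0 (kn B)).
have s_uniq : uniq s.
  rewrite cat_uniq !map_inj_in_uniq ?iota_uniq ?andbT /=.
  - apply/hasPn => _ /mapP [y hy ->]; apply/mapP => -[x hx e].
    by move: hx hy; rewrite !mem_iota /= => hx hy; apply: (ue_disj E hx hy (esym e)).
  - by move=> y y'; rewrite !mem_iota; apply: (ue_injB E).
  - by move=> x x'; rewrite !mem_iota; apply: (ue_injA E).
have s_sub : {subset s <= iota 0 (kn C)}.
  move=> z; rewrite mem_cat mem_iota /= => /orP [] /mapP [x].
    by rewrite mem_iota => /= hx ->; apply: (ue_rangeA E).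
  by rewrite mem_iota => /= hx ->; apply: (ue_rangeB E).
have s_perm : perm_eq s (iota 0 (kn C)).
  have s_size : size (iota 0 (kn C)) <= size s.
    by rewrite size_iota size_cat !size_map !size_iota (ue_size E).
  have [_ s_mem] := uniq_min_size s_uniq s_sub s_size.
  by apply: uniq_perm; rewrite ?iota_uniq.
by rewrite -(permP s_perm) count_cat !count_map.
Qed.

Lemma between_sym k (G : kgraph k) i j x y : between G i j x y = between G i j y x.
Proof. by rewrite /between orbC !(andbC (klab G y == _)). Qed.

Section RelabelLeft.
Variables (k ka kb : nat) (ga : 'I_ka -> 'I_k) (gb : 'I_kb -> 'I_k).
Hypothesis ga_inj : injective ga.
Hypothesis ga_gb_disj : forall a b, ga a != gb b.
Variables (A : kgraph ka) (B : kgraph kb) (C : kgraph k) (fa fb : nat -> nat).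
Hypothesis E : union_embedding ga gb A B C fa fb.

Lemma between_relabelA i j x x' : x < kn A -> x' < kn A ->
  between C (ga i) (ga j) (fa x) (fa x') = between A i j x x'.
Proof. by move=> hx hx'; rewrite /between !(ue_labA E) // !(inj_eq ga_inj). Qed.

Lemma between_relabelB i j y z : y < kn B ->
  between C (ga i) (ga j) (fb y) z = false.
Proof.
move=> hy; rewrite /between (ue_labB E) // ![gb _ == _]eq_sym.
by rewrite !(negbTE (ga_gb_disj _ _)).
Qed.

Lemma union_embedding_eta i j :
  union_embedding ga gb (eta_op i j A) B (eta_op (ga i) (ga j) C) fa fb.
Proof.
constructor; try by case: E.
- move=> x x' hx hx' /=.
  have -> : (fa x == fa x') = (x == x').
    by apply/eqP/eqP => [/(ue_injA E hx hx')|->].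
  by rewrite (ue_adjAA E) // between_relabelA // !(ue_rangeA E) // hx hx'.
- by move=> y y' hy hy' /=; rewrite (ue_adjBB E) // between_relabelB // !andbF orbF.
- by move=> x y hx hy /=; rewrite (ue_adjAB E) // between_sym between_relabelB // !andbF.
- by move=> x y hx hy /=; rewrite (ue_adjBA E) // between_relabelB // !andbF.
Qed.

Lemma union_embedding_etab b i j :
  union_embedding ga gb (apply_basic (EtaB b i j) A) B
    (apply_basic (EtaB b (ga i) (ga j)) C) fa fb.
Proof.
pose pC x := (klab C x == ga i) || (klab C x == ga j).
pose pA x := (klab A x == i) || (klab A x == j).
have same_count : count pC (iota 0 (kn C)) = count pA (iota 0 (kn A)).
  rewrite (count_union_embedding _ E) (@eq_in_count _ _ pred0 (iota 0 (kn B))).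
    rewrite count_pred0 addn0; apply: eq_in_count => x; rewrite mem_iota => hx.
    by rewrite /= /pC /pA (ue_labA E hx) !(inj_eq ga_inj).
  move=> y; rewrite mem_iota => hy /=.
  by rewrite /pC (ue_labB E hy) ![gb _ == _]eq_sym !(negbTE (ga_gb_disj _ _)).
by rewrite /= same_count; case: ifP => _ //; apply: union_embedding_eta.
Qed.

Definition extend_at (f : nat -> nat) (n m : nat) : nat -> nat :=
  fun x => if x == n then m else f x.

(* [Add] creates vertex [kn A] of A and vertex [kn C] of C; the embedding of
   A is extended by matching them. *)
Lemma union_embedding_add i :
  union_embedding ga gb (apply_basic (Add i) A) B (apply_basic (Add (ga i)) C)
    (extend_at fa (kn A) (kn C)) fb.
Proof.
set fa' := extend_at fa (kn A) (kn C).
have fa'_new : fa' (kn A) = kn C by rewrite /fa' /extend_at eqxx.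
have fa'_old x : x < kn A -> fa' x = fa x by move=> hx; rewrite /fa' /extend_at ltn_eqF.
have raC := ue_rangeA E; have rbC := ue_rangeB E.
have old_vertex x : x < (kn A).+1 -> x = kn A \/ x < kn A.
  by rewrite ltnS leq_eqVlt => /predU1P.
constructor; rewrite /=.
- by rewrite (ue_size E) addSn.
- move=> x /old_vertex [->|hx]; first by rewrite fa'_new.
  by rewrite fa'_old //; apply: leqW (raC _ hx).
- by move=> y hy; apply: leqW (rbC _ hy).
- move=> x x' /old_vertex [->|hx] /old_vertex [->|hx'] //.
  + by rewrite fa'_new fa'_old // => e; move: (raC _ hx'); rewrite -e ltnn.
  + by rewrite fa'_new fa'_old // => e; move: (raC _ hx); rewrite e ltnn.
  + by rewrite !fa'_old //; apply: (ue_injA E).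
- exact: (ue_injB E).
- move=> x y /old_vertex [->|hx] hy.
    by rewrite fa'_new => e; move: (rbC _ hy); rewrite -e ltnn.
  by rewrite fa'_old //; apply: (ue_disj E).
- move=> x /old_vertex [->|hx]; first by rewrite fa'_new !eqxx.
  by rewrite fa'_old // (ltn_eqF (raC _ hx)) (ltn_eqF hx) (ue_labA E).
- by move=> y hy; rewrite (ltn_eqF (rbC _ hy)) (ue_labB E).
- move=> x x' /old_vertex [->|hx] /old_vertex [->|hx'];
    last by rewrite !fa'_old // (ue_adjAA E) // hx hx' !raC.
  1-3: by rewrite fa'_new !ltnn /= !andbF.
- by move=> y y' hy hy'; rewrite (ue_adjBB E) // !rbC //= andbT.
- move=> x y /old_vertex [->|hx] hy.
    by rewrite fa'_new ltnn !andbF.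
  by rewrite fa'_old // (ue_adjAB E).
- move=> x y /old_vertex [->|hx] hy.
    by rewrite fa'_new ltnn !andbF.
  by rewrite fa'_old // (ue_adjBA E).
Qed.

Lemma union_embedding_basic o : exists fa',
  union_embedding ga gb (apply_basic o A) B (apply_basic (relabel_op ga o) C) fa' fb.
Proof.
case: o => [i|i j|i j|b i j|i j].
- by eexists; apply: union_embedding_add.
- exists fa; constructor; try by case: E.
  + by move=> x hx /=; rewrite (ue_labA E hx) (inj_eq ga_inj); case: ifP.
  + by move=> y hy /=; rewrite (ue_labB E hy) eq_sym (negbTE (ga_gb_disj _ _)).
- by exists fa; apply: union_embedding_eta.
- by exists fa; apply: union_embedding_etab.
- exists fa; constructor; try by case: E.
  + by move=> x x' hx hx' /=; rewrite (ue_adjAA E) // between_relabelA.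
  + by move=> y y' hy hy' /=; rewrite (ue_adjBB E) // between_relabelB // andbT.
  + by move=> x y hx hy /=; rewrite (ue_adjAB E).
  + by move=> x y hx hy /=; rewrite (ue_adjBA E).
Qed.

End RelabelLeft.

Definition is_union k ka kb (ga : 'I_ka -> 'I_k) (gb : 'I_kb -> 'I_k)
  (A : kgraph ka) (B : kgraph kb) (C : kgraph k) : Prop :=
  exists fa fb, union_embedding ga gb A B C fa fb.

Lemma is_union_sym k ka kb (ga : 'I_ka -> 'I_k) (gb : 'I_kb -> 'I_k) A B C :
  is_union ga gb A B C -> is_union gb ga B A C.
Proof. by move=> [fa [fb E]]; exists fb, fa; apply: union_embedding_sym. Qed.

Lemma is_union_elem_left k ka kb (ga : 'I_ka -> 'I_k) (gb : 'I_kb -> 'I_k) :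
  injective ga -> (forall a b, ga a != gb b) ->
  forall F A B C, is_union ga gb A B C ->
  is_union ga gb (apply_elem F A) B (apply_elem (relabel ga F) C).
Proof.
move=> ga_inj disj; elim=> [|o F IH] A B C [fa [fb E]] //=; first by exists fa, fb.
have [fa' E'] := union_embedding_basic ga_inj disj E o.
by apply: IH; exists fa', fb.
Qed.

Section UnionOperations.
Variables (k ka kb : nat) (ga : 'I_ka -> 'I_k) (gb : 'I_kb -> 'I_k).
Hypothesis ga_inj : injective ga.
Hypothesis gb_inj : injective gb.
Hypothesis ga_gb_disj : forall a b, ga a != gb b.

Lemma is_union_elem FA FB A B C : is_union ga gb A B C ->
  is_union ga gb (apply_elem FA A) (apply_elem FB B)
    (apply_elem (union_op ga gb FA FB) C).
Proof.
move=> U; rewrite apply_elem_cat; apply: is_union_sym.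
apply: is_union_elem_left => //; first by move=> b a; rewrite eq_sym.
by apply: is_union_sym; apply: is_union_elem_left.
Qed.

Lemma is_union_iter FA FB A B C n : is_union ga gb A B C ->
  is_union ga gb (iter n (apply_elem FA) A) (iter n (apply_elem FB) B)
    (iter n (apply_elem (union_op ga gb FA FB)) C).
Proof. by move=> U; elim: n => [|n IH] //=; apply: is_union_elem. Qed.

Lemma is_union_bi HA FA LA HB FB LB A B C n : is_union ga gb A B C ->
  is_union ga gb (bi_iter_family A HA FA LA n) (bi_iter_family B HB FB LB n)
    (bi_iter_family C (union_op ga gb HA HB) (union_op ga gb FA FB)
       (union_op ga gb LA LB) n).
Proof.
move=> U; elim: n => [|n IH] //=.
by apply: is_union_elem; apply: is_union_iter; apply: is_union_elem.
Qed.

End UnionOperations.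

Lemma is_union_iso k ka kb (ga : 'I_ka -> 'I_k) (gb : 'I_kb -> 'I_k)
  GA GB A B C : is_union ga gb A B C ->
  graph_iso GA (underlying A) -> graph_iso GB (underlying B) ->
  graph_iso (gunion GA GB) (underlying C).
Proof.
move=> [fa [fb E]] [pa [pa_bij pa_adj]] [pb [pb_bij pb_adj]].
have ra (a : 'I_(gn GA)) : fa (pa a) < kn C := ue_rangeA E (ltn_ord (pa a)).
have rb (b : 'I_(gn GB)) : fb (pb b) < kn C := ue_rangeB E (ltn_ord (pb b)).
pose h (u : 'I_(gn GA) + 'I_(gn GB)) : 'I_(kn C) :=
  match u with inl a => Ordinal (ra a) | inr b => Ordinal (rb b) end.
have h_inj : injective h.
  case=> [a|b] [a'|b'] /(congr1 val) /= e.
  - congr inl; apply: (bij_inj pa_bij); apply: val_inj.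
    exact: (ue_injA E (ltn_ord _) (ltn_ord _) e).
  - by case: (ue_disj E (ltn_ord (pa a)) (ltn_ord (pb b')) e).
  - by case: (ue_disj E (ltn_ord (pa a')) (ltn_ord (pb b)) (esym e)).
  - congr inr; apply: (bij_inj pb_bij); apply: val_inj.
    exact: (ue_injB E (ltn_ord _) (ltn_ord _) e).
exists (h \o split); split.
- apply: inj_card_bij; first exact: inj_comp h_inj (can_inj (@splitK _ _)).
  have := bij_eq_card pa_bij; have := bij_eq_card pb_bij.
  by rewrite /= !card_ord (ue_size E) => -> ->.
- move=> x y /=; case: (split x) => a; case: (split y) => b /=.
  + by rewrite pa_adj /= (ue_adjAA E).
  + by rewrite (ue_adjAB E).
  + by rewrite (ue_adjBA E).
  + by rewrite pb_adj /= (ue_adjBB E).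
Qed.

Definition kunion ka kb (A : kgraph ka) (B : kgraph kb) : kgraph (ka + kb) :=
  @KGraph (ka + kb) (kn A + kn B)
    (fun x y => if x < kn A then (y < kn A) && kadj A x y
                else (kn A <= y) && kadj B (x - kn A) (y - kn A))
    (fun x => if x < kn A then lshift kb (klab A x)
              else rshift ka (klab B (x - kn A))).

Lemma kunion_wf ka kb (A : kgraph ka) (B : kgraph kb) :
  kwf A -> kwf B -> kwf (kunion A B).
Proof.
move=> [symA irrA] [symB irrB]; split => [x y /= hx hy|x /= hx].
  case: (ltnP x (kn A)) => hxA; case: (ltnP y (kn A)) => hyA //=.
    exact: symA.
  by apply: symB; lia.
case: (ltnP x (kn A)) => hxA /=; first by rewrite irrA.
by rewrite irrB ?andbF //; lia.
Qed.

Lemma kunion_is_union ka kb (A : kgraph ka) (B : kgraph kb) :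
  is_union (lshift kb) (@rshift ka kb) A B (kunion A B).
Proof.
exists id, (fun y => y + kn A); constructor => /=.
- by [].
- by move=> x hx; lia.
- by move=> y hy; lia.
- by [].
- by move=> y y' _ _ /eqP; rewrite eqn_add2r => /eqP.
- by move=> x y hx _; lia.
- by move=> x ->.
- by move=> y _; rewrite ltnNge leq_addl /= addnK.
- by move=> x x' -> ->.
- by move=> y y' _ _; rewrite ltnNge !leq_addl /= !addnK.
- by move=> x y -> _; rewrite ltnNge leq_addl.
- by move=> x y hx _; rewrite ltnNge leq_addl /= leqNgt hx.
Qed.

Lemma lshift_rshift_neq ka kb (a : 'I_ka) (b : 'I_kb) : lshift kb a != rshift ka b.
Proof. by rewrite -val_eqE /=; have := ltn_ord a; lia. Qed.

Theorem mainTheorem11 (GA GB : nat -> graph) :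
  (bi_iteratively_constructible GA -> bi_iteratively_constructible GB ->
   bi_iteratively_constructible (fun n => gunion (GA n) (GB n))) /\
  (iteratively_constructible GA -> iteratively_constructible GB ->
   iteratively_constructible (fun n => gunion (GA n) (GB n))).
Proof.
split.
- move=> [ka [A0 [HA [FA [LA [wfA isoA]]]]]] [kb [B0 [HB [FB [LB [wfB isoB]]]]]].
  pose U := union_op (lshift kb) (@rshift ka kb).
  exists (ka + kb), (kunion A0 B0), (U HA HB), (U FA FB), (U LA LB).
  split=> [|n]; first exact: kunion_wf.
  apply: is_union_iso (isoA n) (isoB n); apply: is_union_bi (kunion_is_union _ _).
  + exact: lshift_inj.
  + exact: rshift_inj.
  + exact: lshift_rshift_neq.
- move=> [ka [A0 [FA [wfA isoA]]]] [kb [B0 [FB [wfB isoB]]]].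
  exists (ka + kb), (kunion A0 B0), (union_op (lshift kb) (@rshift ka kb) FA FB).
  split=> [|n]; first exact: kunion_wf.
  apply: is_union_iso (isoA n) (isoB n); apply: is_union_iter (kunion_is_union _ _).
  + exact: lshift_inj.
  + exact: rshift_inj.
  + exact: lshift_rshift_neq.
Qed.
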